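(* In the two-type setting, suppose $\phi_1\sigma>1$. Then for every $M>0$ there is $\bar k\in\mathbb N$ such that for every $q^0_2\in[0,\bar p_2]$ there is $0\le k\le\bar k$ with $$\prod_{j=0}^{k-1}\phi_1\psi(\beta_2q^j_2)>M,$$ where $q^j_2$ is the second coordinate of $h^j(0,q^0_2)$.
   Context: Two-type limiting map: $\beta_1,\beta_2>0$, $\alpha(1),\alpha(2)\in[0,1)$, $\phi_i=(1-\alpha(i))\beta_i$. For $p\in[0,1]^2$, $S(p)=\beta_1p_1+\beta_2p_2$ and $f^{(i)}(p)=(1-e^{-S(p)})\beta_ip_i/S(p)$ ($=0$ if $S(p)=0$). For $\alpha\in(0,1)$ let $g_\alpha(x)=\frac{(1-\sqrt{1-4(1-\alpha)x(1-x)})^3}{8(1-\alpha)^2x^2}$ for $x\in(0,1]$ and $g_\alpha(0)=0$; let $g_0(x)=x$ for $x\le1/2$ and $g_0(x)=(1-x)^3/x^2$ for $x>1/2$. $h(p)=(h_1(p),h_2(p))$ with $h_i(p)=g_{\alpha(i)}(f^{(i)}(p))$; note $h(0,x)=(0,g_{\alpha(2)}(1-e^{-\beta_2x}))$. $\bar p_i=\sup_{x\in[0,1]}g_{\alpha(i)}(x)$. $\psi(x)=(1-e^{-x})/x$, $\psi(0)=1$. For $x\in[0,1]$ let $\Psi_n(x)=\big(\prod_{k=0}^{n-1}\psi(\beta_2h^k_2(0,x))\big)^{1/n}$, $\underline\Psi(x)=\liminf_{n\to\infty}\Psi_n(x)$, and $\sigma=\inf_{x\in[0,\bar p_2]}\underline\Psi(x)$.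 *)

From Stdlib Require Import Reals Lra.
Open Scope R_scope.

Definition galpha (a x : R) : R :=
  if Req_EM_T a 0 then
    (if Rle_dec x (1/2) then x else (1 - x) ^ 3 / x ^ 2)
  else
    (if Req_EM_T x 0 then 0
     else (1 - sqrt (1 - 4 * (1 - a) * x * (1 - x))) ^ 3
          / (8 * (1 - a) ^ 2 * x ^ 2)).

Definition Ssum (b1 b2 : R) (p : R * R) : R := b1 * fst p + b2 * snd p.

Definition fmap (b1 b2 bi pi : R) (p : R * R) : R :=
  let s := Ssum b1 b2 p in
  if Req_EM_T s 0 then 0 else (1 - exp (- s)) * bi * pi / s.

Definition hmap (b1 b2 a1 a2 : R) (p : R * R) : R * R :=
  (galpha a1 (fmap b1 b2 b1 (fst p) p), galpha a2 (fmap b1 b2 b2 (snd p) p)).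

Fixpoint hiter (b1 b2 a1 a2 : R) (k : nat) (p : R * R) : R * R :=
  match k with
  | O => p
  | S k' => hmap b1 b2 a1 a2 (hiter b1 b2 a1 a2 k' p)
  end.

Definition psi (x : R) : R :=
  if Req_EM_T x 0 then 1 else (1 - exp (- x)) / x.

Fixpoint prodR (u : nat -> R) (n : nat) : R :=
  match n with
  | O => 1
  | S n' => prodR u n' * u n'
  end.

Definition PsiN (b1 b2 a1 a2 : R) (x : R) (n : nat) : R :=
  Rpower (prodR (fun k => psi (b2 * snd (hiter b1 b2 a1 a2 k (0, x)))) n)
         (1 / INR n).

Definition is_liminf (u : nat -> R) (L : R) : Prop :=
  (forall eps, eps > 0 -> exists N, forall n, (n >= N)%nat -> u n > L - eps) /\
  (forall eps, eps > 0 -> forall N, exists n, (n >= N)%nat /\ u n < L + eps).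

Definition is_inf (E : R -> Prop) (s : R) : Prop :=
  (forall y, E y -> s <= y) /\ (forall b, (forall y, E y -> b <= y) -> b <= s).

(* For a fixed start q, the liminf of the geometric means Psi_n(q) is at least
   sigma > 1/phi_1, so phi_1 Psi_n(q) eventually exceeds a constant c > 1 and the
   product prod_{j<n} phi_1 psi(beta_2 q_2^j) = (phi_1 Psi_n(q))^n grows beyond M.
   Since h maps the axis {p_1 = 0} into itself by a continuous map, each finite
   product is continuous in q; the open sets where the k-th product exceeds M
   cover the compact segment [0, pbar_2], and a finite subcover gives kbar. *)

From Stdlib Require Import Reals Lra Lia Classical ClassicalEpsilon.
From Coquelicot Require Import Coquelicot.
Open Scope R_scope.

Lemma continuity_pt_of_ex_derive (f : R -> R) (x : R) :
  ex_derive f x -> continuity_pt f x.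
Proof. intros Hf; apply continuity_pt_filterlim, (ex_derive_continuous f x Hf). Qed.

Lemma continuity_pt_glue (f g : R -> R) (c x : R) :
  (x <= c -> continuity_pt f x) -> (c <= x -> continuity_pt g x) -> f c = g c ->
  continuity_pt (fun y => if Rle_dec y c then f y else g y) x.
Proof.
  intros Hf Hg Hc.
  destruct (Rtotal_order x c) as [Hlt | [-> | Hgt]].
  - apply (continuity_pt_locally_ext f _ (c - x)); [lra | | now apply Hf; lra].
    intros y Hy; unfold Rdist in Hy; apply Rabs_def2 in Hy.
    destruct (Rle_dec y c); [reflexivity | lra].
  - intros eps Heps.
    destruct (Hf (Rle_refl c) eps Heps) as [df [Hdf Hf']].
    destruct (Hg (Rle_refl c) eps Heps) as [dg [Hdg Hg']].
    exists (Rmin df dg); split; [now apply Rmin_glb_lt |].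
    intros y [Hy Hyc]; simpl in *.
    destruct (Rle_dec c c) as [_ | C]; [| lra].
    destruct (Rle_dec y c).
    + apply Hf'; split; [exact Hy | eapply Rlt_le_trans; [exact Hyc | apply Rmin_l]].
    + rewrite Hc; apply Hg'; split; [exact Hy | eapply Rlt_le_trans; [exact Hyc | apply Rmin_r]].
  - apply (continuity_pt_locally_ext g _ (x - c)); [lra | | now apply Hg; lra].
    intros y Hy; unfold Rdist in Hy; apply Rabs_def2 in Hy.
    destruct (Rle_dec y c); [lra | reflexivity].
Qed.

Lemma galpha_0_l (y : R) :
  galpha 0 y = if Rle_dec y (1/2) then y else (1 - y) ^ 3 / y ^ 2.
Proof. unfold galpha; destruct (Req_EM_T 0 0); [reflexivity | lra]. Qed.

Lemma galpha_0_r (a : R) : galpha a 0 = 0.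
Proof.
  unfold galpha; destruct (Req_EM_T a 0); [destruct (Rle_dec 0 (1/2)); lra |].
  destruct (Req_EM_T 0 0); lra.
Qed.

Lemma galpha_disc_pos (a y : R) : 0 < a <= 1 -> 0 < 1 - 4 * (1 - a) * y * (1 - y).
Proof.
  intros Ha.
  replace (1 - 4 * (1 - a) * y * (1 - y)) with ((1 - a) * ((2 * y - 1) * (2 * y - 1)) + a) by ring.
  pose proof (Rle_0_sqr (2 * y - 1)); unfold Rsqr in *; nra.
Qed.

(* Rationalising [1 - sqrt (1 - t) = t / (1 + sqrt (1 - t))] removes the
   apparent singularity at [y = 0]. *)
Lemma galpha_pos_closed (a y : R) : 0 < a < 1 ->
  galpha a y = 8 * (1 - a) * y * (1 - y) ^ 3
               / (1 + sqrt (1 - 4 * (1 - a) * y * (1 - y))) ^ 3.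
Proof.
  intros Ha; unfold galpha.
  destruct (Req_EM_T a 0) as [|_]; [lra |].
  set (s := sqrt (1 - 4 * (1 - a) * y * (1 - y))).
  assert (Hs0 : 0 <= s) by apply sqrt_pos.
  assert (Hs2 : s * s = 1 - 4 * (1 - a) * y * (1 - y))
    by (apply sqrt_sqrt; pose proof (galpha_disc_pos a y); lra).
  destruct (Req_EM_T y 0) as [-> | Hy]; [field; lra |].
  replace (1 - s) with (4 * (1 - a) * y * (1 - y) / (1 + s)) by (field_simplify_eq; lra).
  field; repeat split; lra.
Qed.

Lemma galpha_continuity_pt (a x : R) : 0 <= a < 1 -> continuity_pt (galpha a) x.
Proof.
  intros Ha; destruct (Req_dec a 0) as [-> | Ha0].
  - apply (continuity_pt_ext (fun y => if Rle_dec y (1/2) then y else (1 - y) ^ 3 / y ^ 2)).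
    { intro; now rewrite galpha_0_l. }
    apply continuity_pt_glue; [| | field].
    + intros _; apply continuity_pt_of_ex_derive; auto_derive; trivial.
    + intros Hx; apply continuity_pt_of_ex_derive; auto_derive; nra.
  - assert (Hpos : 0 < a < 1) by lra.
    apply (continuity_pt_ext (fun y => 8 * (1 - a) * y * (1 - y) ^ 3
               / (1 + sqrt (1 - 4 * (1 - a) * y * (1 - y))) ^ 3)).
    { intro; now rewrite galpha_pos_closed. }
    pose proof (galpha_disc_pos a x ltac:(lra)).
    apply continuity_pt_of_ex_derive; auto_derive.
    split; [lra |]; split; [| trivial].
    match goal with |- (1 + sqrt ?d) * _ <> 0 => pose proof (sqrt_pos d) end.
    apply Rgt_not_eq; repeat apply Rmult_lt_0_compat; lra.
Qed.

(* At [0], [psi] is the difference quotient of [exp] at [0], with [psi 0 = exp' 0]. *)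
Lemma psi_continuity_pt (x : R) : continuity_pt psi x.
Proof.
  destruct (Req_dec x 0) as [-> | Hx].
  - intros eps Heps; destruct (derivable_pt_lim_exp 0 eps Heps) as [d Hd].
    exists d; split; [apply cond_pos |].
    intros y [[_ Hy0] Hy]; simpl in *; unfold R_dist in Hy; rewrite Rminus_0_r in Hy.
    unfold psi; destruct (Req_EM_T y 0) as [| _]; [congruence |].
    destruct (Req_EM_T 0 0) as [_ |]; [| lra].
    specialize (Hd (- y) ltac:(lra) ltac:(now rewrite Rabs_Ropp)).
    rewrite Rplus_0_l, exp_0 in Hd.
    replace ((1 - exp (- y)) / y) with ((exp (- y) - 1) / - y) by (field; auto).
    exact Hd.
  - apply (continuity_pt_locally_ext (fun y => (1 - exp (- y)) / y) _ (Rabs x)).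
    + now apply Rabs_pos_lt.
    + intros y Hy; unfold psi; destruct (Req_EM_T y 0) as [-> |]; [| reflexivity].
      unfold Rdist in Hy; rewrite Rminus_0_l, Rabs_Ropp in Hy; lra.
    + apply continuity_pt_of_ex_derive; auto_derive; trivial.
Qed.

Lemma psi_gt0 (y : R) : 0 < psi y.
Proof.
  unfold psi; destruct (Req_EM_T y 0) as [| Hy]; [lra |].
  destruct (Rlt_or_le 0 y) as [Hpos | Hneg].
  - assert (exp (- y) < 1) by (rewrite <- exp_0; apply exp_increasing; lra).
    apply Rdiv_lt_0_compat; lra.
  - assert (1 < exp (- y)) by (rewrite <- exp_0; apply exp_increasing; lra).
    replace ((1 - exp (- y)) / y) with ((exp (- y) - 1) / - y) by (field; auto).
    apply Rdiv_lt_0_compat; lra.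
Qed.

Definition axis_map (b2 a2 x : R) : R := galpha a2 (1 - exp (- (b2 * x))).

Lemma hmap_axis (b1 b2 a1 a2 x : R) :
  hmap b1 b2 a1 a2 (0, x) = (0, axis_map b2 a2 x).
Proof.
  unfold hmap, fmap, Ssum, axis_map; simpl.
  rewrite Rmult_0_r, Rplus_0_l.
  destruct (Req_EM_T (b2 * x) 0) as [Hz | Hz].
  - now rewrite Hz, Ropp_0, exp_0, Rminus_eq_0, !galpha_0_r.
  - rewrite Rmult_0_r, Rdiv_0_l, galpha_0_r; f_equal; f_equal.
    field; split; intros ->; apply Hz; ring.
Qed.

Lemma hiter_axis (b1 b2 a1 a2 x : R) (j : nat) :
  hiter b1 b2 a1 a2 j (0, x) = (0, Nat.iter j (axis_map b2 a2) x).
Proof. induction j as [| j IH]; simpl; [reflexivity |]; now rewrite IH, hmap_axis. Qed.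

Lemma prodR_gt0 (w : nat -> R) (n : nat) : (forall j, 0 < w j) -> 0 < prodR w n.
Proof.
  intros Hw; induction n as [| n IH]; simpl; [lra |].
  now apply Rmult_lt_0_compat.
Qed.

Lemma prodR_scale (c : R) (w : nat -> R) (n : nat) :
  prodR (fun j => c * w j) n = c ^ n * prodR w n.
Proof. induction n as [| n IH]; simpl; [ring |]; rewrite IH; ring. Qed.

Lemma continuity_pt_prodR (F : nat -> R -> R) (n : nat) (x : R) :
  (forall j, continuity_pt (F j) x) ->
  continuity_pt (fun y => prodR (fun j => F j y) n) x.
Proof.
  intros HF; induction n as [| n IH]; simpl.
  - now apply continuity_pt_const.
  - exact (continuity_pt_mult _ _ x IH (HF n)).
Qed.

Lemma Rpower_inv_INR_pow (A : R) (n : nat) :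
  0 < A -> (1 <= n)%nat -> Rpower A (1 / INR n) ^ n = A.
Proof.
  intros HA Hn; rewrite <- Rpower_pow by apply exp_pos.
  rewrite Rpower_mult; replace (1 / INR n * INR n) with 1; [now apply Rpower_1 |].
  field; apply not_0_INR; lia.
Qed.

Lemma prodR_scale_unbounded (phi c M : R) (w : nat -> R) :
  0 < phi -> 1 < phi * c -> (forall j, 0 < w j) ->
  (exists N, forall n, (N <= n)%nat -> c < Rpower (prodR w n) (1 / INR n)) ->
  exists n, M < prodR (fun j => phi * w j) n.
Proof.
  intros Hphi Hc Hw [N HN].
  destruct (Pow_x_infinity (phi * c) ltac:(rewrite Rabs_right; lra) (M + 1)) as [N' HN'].
  exists (N + N' + 1)%nat; set (n := (N + N' + 1)%nat).
  assert (Hgrow : M + 1 <= (phi * c) ^ n).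
  { specialize (HN' n ltac:(unfold n; lia)).
    rewrite Rabs_right in HN' by (apply Rle_ge, pow_le; lra); lra. }
  assert (Hroot : (phi * c) ^ n <= (phi * Rpower (prodR w n) (1 / INR n)) ^ n).
  { apply pow_incr; split; [lra |].
    apply Rmult_le_compat_l; [lra |]; left; apply HN; unfold n; lia. }
  rewrite (Rpow_mult_distr phi (Rpower _ _)), Rpower_inv_INR_pow in Hroot
    by first [now apply prodR_gt0 | unfold n; lia].
  rewrite prodR_scale; lra.
Qed.

Lemma eventually_gt_of_liminf_lb (u : nat -> R) (s c : R) :
  (forall n, 0 <= u n) -> (forall y, is_liminf u y -> s <= y) -> c < s ->
  exists N, forall n, (N <= n)%nat -> c < u n.
Proof.
  intros Hu Hs Hcs; destruct (ex_LimInf_seq u) as [[r | |] Hl].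
  - assert (Hr : is_liminf u r).
    { split.
      - intros eps Heps; destruct (Hl (mkposreal eps Heps)) as [_ [N HN]].
        exists N; intros n Hn; exact (HN n Hn).
      - intros eps Heps; exact (proj1 (Hl (mkposreal eps Heps))). }
    assert (Hcr : 0 < r - c) by (specialize (Hs r Hr); lra).
    destruct (Hl (mkposreal _ Hcr)) as [_ [N HN]].
    exists N; intros n Hn; specialize (HN n Hn); simpl in HN; lra.
  - exact (Hl c).
  - destruct (Hl 0 O) as [n [_ Hn]]; specialize (Hu n); lra.
Qed.

Lemma segment_cluster_point (a b : R) (u : nat -> R) :
  (forall n, a <= u n <= b) ->
  exists l, a <= l <= b /\
    forall d, 0 < d -> forall N, exists p, (N <= p)%nat /\ Rabs (u p - l) < d.
Proof.
  intros Hu; destruct (Bolzano_Weierstrass u _ (compact_P3 a b) Hu) as [l Hl].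
  assert (Hnear : forall d, 0 < d -> forall N, exists p, (N <= p)%nat /\ Rabs (u p - l) < d).
  { intros d Hd N; apply (Hl (disc l (mkposreal d Hd)) N).
    now exists (mkposreal d Hd). }
  exists l; split; [| exact Hnear].
  split; apply Rnot_lt_le; intros Hout.
  - destruct (Hnear (a - l) ltac:(lra) O) as [p [_ Hp]].
    apply Rabs_def2 in Hp; specialize (Hu p); lra.
  - destruct (Hnear (l - b) ltac:(lra) O) as [p [_ Hp]].
    apply Rabs_def2 in Hp; specialize (Hu p); lra.
Qed.

Lemma uniform_index_on_segment (a b M : R) (F : nat -> R -> R) :
  (forall k x, a <= x <= b -> continuity_pt (F k) x) ->
  (forall x, a <= x <= b -> exists k, M < F k x) ->
  exists K, forall x, a <= x <= b -> exists k, (k <= K)%nat /\ M < F k x.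
Proof.
  intros Hcont Hpt; apply NNPP; intros Hno.
  assert (Hbad : forall n, exists x, a <= x <= b /\ forall k, (k <= n)%nat -> F k x <= M).
  { intros n; apply NNPP; intros Hn; apply Hno; exists n; intros x Hx.
    apply NNPP; intros Hk; apply Hn; exists x; split; [exact Hx |].
    intros k Hkn; apply Rnot_lt_le; intros HM; apply Hk; now exists k. }
  destruct (choice _ Hbad) as [u Hu].
  destruct (segment_cluster_point a b u (fun n => proj1 (Hu n))) as [l [Hl Hnear]].
  destruct (Hpt l Hl) as [k Hk].
  destruct (Hcont k l Hl (F k l - M) ltac:(lra)) as [d [Hd Hball]].
  destruct (Hnear d Hd k) as [p [Hkp Hp]].
  destruct (Req_dec (u p) l) as [Heq | Hne].
  - specialize (proj2 (Hu p) k Hkp); rewrite Heq; lra.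
  - specialize (Hball (u p) (conj (conj I (not_eq_sym Hne)) Hp)); simpl in Hball.
    unfold R_dist in Hball; apply Rabs_def2 in Hball.
    specialize (proj2 (Hu p) k Hkp); lra.
Qed.

Lemma continuity_pt_axis_iter (b2 a2 x : R) (j : nat) :
  0 <= a2 < 1 -> continuity_pt (Nat.iter j (axis_map b2 a2)) x.
Proof.
  intros Ha2; induction j as [| j IH].
  - exact (continuity_pt_id x).
  - change (Nat.iter (S j) (axis_map b2 a2))
      with (comp (axis_map b2 a2) (Nat.iter j (axis_map b2 a2))).
    apply continuity_pt_comp; [exact IH |].
    apply (continuity_pt_comp (fun y => 1 - exp (- (b2 * y))) (galpha a2)).
    + now apply continuity_pt_of_ex_derive; auto_derive.
    + now apply galpha_continuity_pt.
Qed.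

Lemma continuity_pt_axis_weight (b1 b2 a1 a2 x : R) (j : nat) :
  0 <= a2 < 1 -> continuity_pt (fun q => psi (b2 * snd (hiter b1 b2 a1 a2 j (0, q)))) x.
Proof.
  intros Ha2.
  apply (continuity_pt_ext (comp psi (fun q => b2 * Nat.iter j (axis_map b2 a2) q))).
  { intros q; unfold comp; now rewrite hiter_axis. }
  apply continuity_pt_comp; [| apply psi_continuity_pt].
  apply continuity_pt_mult; [now apply continuity_pt_const |].
  now apply continuity_pt_axis_iter.
Qed.

Lemma PsiN_gt0 (b1 b2 a1 a2 x : R) (n : nat) : 0 < PsiN b1 b2 a1 a2 x n.
Proof. apply exp_pos. Qed.

Theorem mainTheorem18
  (beta1 beta2 alpha1 alpha2 : R)
  (Hb1 : 0 < beta1) (Hb2 : 0 < beta2)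
  (Ha1 : 0 <= alpha1 < 1) (Ha2 : 0 <= alpha2 < 1)
  (pbar2 sigma : R)
  (Hpbar2 : is_lub (fun y => exists x, 0 <= x <= 1 /\ y = galpha alpha2 x) pbar2)
  (Hsigma : is_inf (fun y => exists x, 0 <= x <= pbar2 /\
                      is_liminf (PsiN beta1 beta2 alpha1 alpha2 x) y) sigma)
  (Hphi : (1 - alpha1) * beta1 * sigma > 1) :
  forall M : R, M > 0 ->
  exists kbar : nat, forall q0 : R, 0 <= q0 <= pbar2 ->
  exists k : nat, (k <= kbar)%nat /\
    prodR (fun j => (1 - alpha1) * beta1 *
                    psi (beta2 * snd (hiter beta1 beta2 alpha1 alpha2 j (0, q0)))) k > M.
Proof.
  intros M _; set (phi := (1 - alpha1) * beta1) in *.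
  assert (Hphi0 : 0 < phi) by (apply Rmult_lt_0_compat; lra).
  apply uniform_index_on_segment.
  - intros k q _.
    apply (continuity_pt_prodR (fun j q => phi *
             psi (beta2 * snd (hiter beta1 beta2 alpha1 alpha2 j (0, q))))); intros j.
    apply continuity_pt_mult; [now apply continuity_pt_const |].
    now apply continuity_pt_axis_weight.
  - intros q Hq.
    set (c := (sigma + / phi) / 2).
    assert (Hsc : / phi < sigma)
      by (apply (Rmult_lt_reg_l phi); [exact Hphi0 | rewrite Rinv_r; lra]).
    apply (prodR_scale_unbounded phi c M); [exact Hphi0 | | intros; apply psi_gt0 |].
    + unfold c; replace (phi * ((sigma + / phi) / 2)) with ((phi * sigma + 1) / 2)
        by (field; lra); lra.
    + apply (eventually_gt_of_liminf_lb _ sigma);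
        [intros n; left; apply PsiN_gt0 | | unfold c; lra].
      intros y Hy; apply (proj1 Hsigma); now exists q.
Qed.
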